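(* Let $\mathcal{G}$ and $\mathcal{H}$ be regular families of finite subsets of $\mathbb{N}$. Suppose $F_1<F_2<\dots<F_k$ are finite subsets of $\mathbb{N}$ with $\bigcup_{j=1}^kF_j\in\mathcal{G}[\mathcal{H}]$. If $F_j\notin\mathcal{H}$ for all $1\le j\le k$, then $\{\min F_1,\dots,\min F_k\}\in\mathcal{G}$.
   Context: For finite $E,F\subseteq\mathbb{N}$, $E<F$ means $\max E<\min F$. A family $\mathcal{F}$ of finite subsets of $\mathbb{N}$ is regular if it is hereditary (closed under subsets), spreading (if $\{n_1<\dots<n_k\}\in\mathcal{F}$ and $m_1<\dots<m_k$ with $m_i\ge n_i$, then $\{m_1,\dots,m_k\}\in\mathcal{F}$), and compact in $2^{\mathbb{N}}$ (product topology). A sequence $E_1<\dots<E_k$ is $\mathcal{M}$-admissible if $\{\min E_1,\dots,\min E_k\}\in\mathcal{M}$. For regular $\mathcal{M},\mathcal{N}$, $\mathcal{M}[\mathcal{N}]=\{\bigcup_{i=1}^kF_i: F_i\in\mathcal{N}\text{ for all }i,\ \{F_1,\dots,F_k\}\text{ is }\mathcal{M}\text{-admissible}\}$. *)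

From HB Require Import structures.
From mathcomp Require Import all_boot.
From mathcomp Require Import finmap.
Set Implicit Arguments. Unset Strict Implicit. Unset Printing Implicit Defensive.
Local Open Scope fset_scope.

Definition set_family := {fset nat} -> Prop.

Definition enum_inc (E : {fset nat}) : seq nat := sort leq E.

(* min E (only used for nonempty E; defaults to 0 on the empty set) *)
Definition fmin (E : {fset nat}) : nat := head 0 (enum_inc E).

Definition fset_lt (E F : {fset nat}) : Prop :=
  E != fset0 /\ F != fset0 /\ forall x y, x \in E -> y \in F -> x < y.

Definition hereditary (F : set_family) : Prop :=
  forall E E' : {fset nat}, E' `<=` E -> F E -> F E'.

Definition spreading (F : set_family) : Prop :=
  forall E E' : {fset nat}, F E -> #|` E'| = #|` E| ->
    (forall i, i < #|` E| -> nth 0 (enum_inc E) i <= nth 0 (enum_inc E') i) ->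
    F E'.

(* closedness (equivalently compactness) of F, seen as a subset of 2^N with
   the product topology: every point A of 2^N all of whose basic
   neighbourhoods (determined by A on {0,...,n-1}) meet F, is in F. *)
Definition compact_family (F : set_family) : Prop :=
  forall A : nat -> bool,
    (forall n, exists E, F E /\ forall i, i < n -> (i \in E) = A i) ->
    exists E, F E /\ forall i, (i \in E) = A i.

Definition regular (F : set_family) : Prop :=
  hereditary F /\ spreading F /\ compact_family F.

Definition successive (s : seq {fset nat}) : Prop :=
  (forall E, E \in s -> E != fset0) /\
  (forall i j, i < j < size s -> fset_lt (nth fset0 s i) (nth fset0 s j)).

Definition mins (s : seq {fset nat}) : {fset nat} := [fset x | x in map fmin s].

Definition admissible (M : set_family) (s : seq {fset nat}) : Prop :=
  successive s /\ M (mins s).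

Definition bigunion (s : seq {fset nat}) : {fset nat} :=
  \bigcup_(E <- s) E.

Definition compose (M N : set_family) : set_family :=
  fun U => exists s : seq {fset nat},
    (forall E, E \in s -> N E) /\ admissible M s /\ U = bigunion s.

(* Write the union of the F_j as a union of E_1 < ... < E_l with E_i in H and
   {min E_i} in G.  Sending each x to the largest min E_i below x maps
   {min F_j} strictly increasingly into {min E_i}: below min F_j lies the min
   of the E containing it, and since F_j is not in H it is not contained in
   that E, so some later E' meets F_j and min E' lies in (min F_j, min F_{j+1}].
   The image lies in G by heredity, and {min F_j} is a spread of it. *)

From HB Require Import structures.
From mathcomp Require Import all_boot finmap.

Set Implicit Arguments.
Unset Strict Implicit.
Unset Printing Implicit Defensive.

Local Open Scope fset_scope.

Lemma fmin_mem (E : {fset nat}) : E != fset0 -> fmin E \in E.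
Proof.
rewrite /fmin /enum_inc -(mem_sort leq).
case: (sort leq E) (size_sort leq E) => [|a l] /=; last by rewrite inE eqxx.
by move/esym/eqP; rewrite cardfs_eq0 => /eqP ->; rewrite eqxx.
Qed.

Lemma fmin_le (E : {fset nat}) z : z \in E -> fmin E <= z.
Proof.
rewrite /fmin /enum_inc -(mem_sort leq).
case: (sort leq E) (sort_sorted leq_total E) => [|a l] //= a_path.
rewrite inE => /predU1P [-> //|z_l].
exact: (allP (order_path_min leq_trans a_path)).
Qed.

Lemma minsP (u : seq {fset nat}) x :
  reflect (exists2 E, E \in u & x = fmin E) (x \in mins u).
Proof.
apply: (iffP idP) => [/imfsetP [y /mapP [E E_u ->] ->]|[E E_u ->]].
  by exists E.
by apply/imfsetP; exists (fmin E) => //; apply: map_f.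
Qed.

Lemma bigunionP (u : seq {fset nat}) x :
  reflect (exists2 E, E \in u & x \in E) (x \in bigunion u).
Proof.
apply: (iffP (bigfcupP _ _ _ _)) => [[E /andP [E_u _] xE]|[E E_u xE]].
  by exists E.
by exists E; rewrite ?E_u.
Qed.

Lemma successive_neq0 (u : seq {fset nat}) E :
  successive u -> E \in u -> E != fset0.
Proof. by case=> u_neq0 _; apply: u_neq0. Qed.

Lemma successive_lt (u : seq {fset nat}) (E E' : {fset nat}) x y :
  successive u -> E \in u -> E' \in u -> E != E' ->
  x \in E -> y \in E' -> x < y -> fset_lt E E'.
Proof.
case=> _ u_lt E_u E'_u neq_EE' xE yE' lt_xy.
have [iE iE'] : index E u < size u /\ index E' u < size u by rewrite !index_mem.
case: (ltngtP (index E u) (index E' u)) => [lt_ii'|lt_i'i|eq_ii'].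
- by have := u_lt _ _ (introT andP (conj lt_ii' iE')); rewrite !nth_index.
- have := u_lt _ _ (introT andP (conj lt_i'i iE)); rewrite !nth_index //.
  by case=> _ [_ /(_ y x yE' xE)]; rewrite ltnNge (ltnW lt_xy).
- by move: neq_EE'; rewrite -(nth_index fset0 E_u) eq_ii' nth_index ?eqxx.
Qed.

Lemma enum_inc_imfset (f : nat -> nat) (A : {fset nat}) :
  {in A &, forall x y, x < y -> f x < f y} ->
  enum_inc [fset f x | x in A] = map f (enum_inc A).
Proof.
move=> f_mono.
have A_lt : sorted ltn (enum_inc A).
  by rewrite ltn_sorted_uniq_leq sort_uniq fset_uniq (sort_sorted leq_total).
have : sorted ltn (map f (enum_inc A)).
  apply: (homo_sorted_in (P := mem A)) A_lt => //.
  by apply/allP => x; rewrite mem_sort.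
rewrite ltn_sorted_uniq_leq => /andP [fA_uniq fA_sorted].
apply: (sorted_eq leq_trans anti_leq (sort_sorted leq_total _) fA_sorted).
apply: uniq_perm; rewrite ?sort_uniq ?fset_uniq // => y.
rewrite mem_sort; apply/imfsetP/mapP => -[x xA ->]; exists x => //.
  by rewrite mem_sort.
by rewrite mem_sort in xA.
Qed.

Section SpreadingFamily.

Variable G : set_family.
Hypotheses (G_hered : hereditary G) (G_spread : spreading G).

Lemma spreading_imfset (f : nat -> nat) (A : {fset nat}) :
  {in A &, forall x y, x < y -> f x < f y} -> (forall x, f x <= x) ->
  G [fset f x | x in A] -> G A.
Proof.
move=> f_mono f_le GfA; have fA_enum := enum_inc_imfset f_mono.
have card_fA : #|` [fset f x | x in A]| = #|` A|.
  by have := congr1 size fA_enum; rewrite size_map /enum_inc !size_sort.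
apply: (G_spread GfA) => // i; rewrite card_fA => iA.
by rewrite fA_enum (nth_map 0) // /enum_inc size_sort.
Qed.

Lemma spreading_interlaced (M A : {fset nat}) :
  G M -> (forall a, a \in A -> exists2 m, m \in M & m <= a) ->
  (forall a b, a \in A -> b \in A -> a < b ->
     exists2 m, m \in M & a < m <= b) ->
  G A.
Proof.
move=> GM M_below M_between.
pose p x := \max_(m <- M | m <= x) m.
have p_ge x m : m \in M -> m <= x -> m <= p x.
  by move=> mM le_mx; apply: (leq_bigmax_seq (F := id)).
have p_le x : p x <= x by apply/bigmax_leqP_seq.
have p_mem x : (exists2 m, m \in M & m <= x) -> p x \in M.
  case=> m mM le_mx; have [//|px0] : p x \in M \/ p x = 0.
    rewrite /p big_seq_cond; apply: (big_ind (fun v => v \in M \/ v = 0)).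
    - by right.
    - by move=> v w Mv Mw; rewrite /maxn; case: ifP.
    - by move=> i /andP [iM _]; left.
  by move: (p_ge x m mM le_mx); rewrite px0 leqn0 => /eqP <-.
apply: (spreading_imfset (f := p)) => //.
  move=> x y xA yA lt_xy; have [m mM /andP [lt_xm le_my]] := M_between x y xA yA lt_xy.
  exact: leq_ltn_trans (p_le x) (leq_trans lt_xm (p_ge y m mM le_my)).
apply: (G_hered _ GM); apply/fsubsetP => _ /imfsetP [x /= xA ->].
exact/p_mem/M_below.
Qed.

End SpreadingFamily.

Section Refinement.

Variables (H : set_family) (s t : seq {fset nat}).
Hypotheses (H_hered : hereditary H) (s_succ : successive s)
  (t_succ : successive t) (union_st : bigunion s = bigunion t)
  (t_H : forall E, E \in t -> H E) (s_notH : forall F, F \in s -> ~ H F).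

Lemma mem_refinement x F : F \in s -> x \in F -> exists2 E, E \in t & x \in E.
Proof. by move=> F_s xF; apply/bigunionP; rewrite -union_st; apply/bigunionP; exists F. Qed.

Lemma mins_refinement_below a :
  a \in mins s -> exists2 m, m \in mins t & m <= a.
Proof.
case/minsP=> F F_s ->.
have [E E_t minF_E] := mem_refinement F_s (fmin_mem (successive_neq0 s_succ F_s)).
by exists (fmin E); [apply/minsP; exists E | apply: fmin_le].
Qed.

Lemma mins_refinement_between a b :
  a \in mins s -> b \in mins s -> a < b -> exists2 m, m \in mins t & a < m <= b.
Proof.
case/minsP=> F F_s ->; case/minsP=> F' F'_s -> lt_minF.
have [F0 F'0] := (successive_neq0 s_succ F_s, successive_neq0 s_succ F'_s).
have [_ [_ F_lt_F']] : fset_lt F F'.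
  apply: (successive_lt s_succ F_s F'_s _ (fmin_mem F0) (fmin_mem F'0) lt_minF).
  by apply: contraTneq lt_minF => ->; rewrite ltnn.
have [E E_t minF_E] := mem_refinement F_s (fmin_mem F0).
have [z zF zNE] : exists2 z, z \in F & z \notin E.
  by apply/fsubsetPn/negP => FE; apply: s_notH F_s (H_hered FE (t_H E_t)).
have [E' E'_t zE'] := mem_refinement F_s zF.
have lt_minF_z : fmin F < z.
  by rewrite ltn_neqAle (fmin_le zF) andbT; apply: contraNneq zNE => <-.
have [_ [E'0 E_lt_E']] : fset_lt E E'.
  apply: (successive_lt t_succ E_t E'_t _ minF_E zE' lt_minF_z).
  by apply: contraNneq zNE => ->.
exists (fmin E'); first by apply/minsP; exists E'.
rewrite E_lt_E' ?fmin_mem //=.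
exact: leq_trans (fmin_le zE') (ltnW (F_lt_F' _ _ zF (fmin_mem F'0))).
Qed.

End Refinement.

Theorem lemma2 (G H : set_family) (hG : regular G) (hH : regular H)
  (s : seq {fset nat}) (hs : successive s)
  (hU : compose G H (bigunion s))
  (hnot : forall E, E \in s -> ~ H E) :
  G (mins s).
Proof.
case: hU => t [t_H [[t_succ G_mins_t] union_st]].
case: hG => G_hered [G_spread _]; case: hH => H_hered _.
apply: (spreading_interlaced G_hered G_spread G_mins_t).
  exact: mins_refinement_below hs union_st.
exact: mins_refinement_between H_hered hs t_succ union_st t_H hnot.
Qed.
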